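(* Let $S$ be a numerical semigroup and $m\in\mathbb{N}$, and suppose the set of gaps $\mathrm{H}(S)$ is equidistributed modulo $m$. Then $m\in S$ if and only if $\mathrm{g}(S)=0$.
   Context: A numerical semigroup is a submonoid $S$ of $(\mathbb{N}_0,+)$ with finite complement; $\mathrm{H}(S)=\mathbb{N}_0\setminus S$ is its set of gaps and $\mathrm{g}(S)=\#\mathrm{H}(S)$ its genus. A finite set $B\subset\mathbb{Z}$ is equidistributed modulo $m$ if for all $r_1,r_2\in\{1,\dots,m\}$ the number of elements of $B$ congruent to $r_1$ modulo $m$ equals the number of elements of $B$ congruent to $r_2$ modulo $m$. *)

From mathcomp Require Import all_boot.
Set Implicit Arguments. Unset Strict Implicit. Unset Printing Implicit Defensive.

Definition numerical_semigroup (S : pred nat) : Prop :=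
  [/\ 0 \in S,
      (forall a b, a \in S -> b \in S -> a + b \in S) &
      exists N, forall n, N <= n -> n \in S].

(* If every n >= N lies in S, the gap set H(S) is exactly the list of       *)
(* n < N with n \notin S (listed without repetition, increasing).           *)
Definition gaps_below (S : pred nat) (N : nat) : seq nat :=
  [seq n <- iota 0 N | n \notin S].

Definition equidistributed (B : seq nat) (m : nat) : Prop :=
  forall r1 r2, 1 <= r1 <= m -> 1 <= r2 <= m ->
    count (fun x => x %% m == r1 %% m) B = count (fun x => x %% m == r2 %% m) B.

From mathcomp Require Import all_boot.

(* If [m \in S] then every multiple of [m] lies in [S], so no gap is divisible
   by [m]: the residue class of [0] contains no gap. Equidistribution then
   forces every residue class, hence the gap set, to be empty. *)

Lemma numerical_semigroup_mulnl (S : pred nat) (a k : nat) :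
  numerical_semigroup S -> a \in S -> k * a \in S.
Proof.
case=> S0 Sadd _ Sa; elim: k => [|k IHk]; first by rewrite mul0n.
by rewrite mulSn; apply: Sadd.
Qed.

Lemma mem_gaps_below (S : pred nat) (N x : nat) :
  (x \in gaps_below S N) = (x \notin S) && (x < N).
Proof. by rewrite mem_filter mem_iota. Qed.

Lemma gaps_below_modn_neq0 (S : pred nat) (m N x : nat) :
  numerical_semigroup S -> m \in S -> x \in gaps_below S N -> x %% m != 0.
Proof.
move=> semS Sm; rewrite mem_gaps_below => /andP[xS _].
apply: contra xS => /eqP x0.
by rewrite (divn_eq x m) x0 addn0 numerical_semigroup_mulnl.
Qed.

Lemma equidistributed_nil (B : seq nat) (m : nat) :
  0 < m -> equidistributed B m -> {in B, forall x, x %% m != 0} -> B = [::].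
Proof.
move=> m0 eqB nzB; case: B => [|x B'] // in eqB nzB *.
have xB : x \in x :: B' by rewrite mem_head.
have rx : 1 <= x %% m <= m by rewrite lt0n nzB // ltnW // ltn_pmod.
have rm : 1 <= m <= m by rewrite m0 leqnn.
have : count (fun y => y %% m == m %% m) (x :: B') = 0.
  rewrite modnn; apply/eqP; rewrite -leqn0 leqNgt -has_count.
  by apply/hasP => -[y yB /eqP y0]; move: (nzB y yB); rewrite y0.
by rewrite -(eqB _ _ rx rm) /= modn_mod eqxx.
Qed.

Lemma gaps_below_nil_mem (S : pred nat) (N n : nat) :
  (forall k, N <= k -> k \in S) -> gaps_below S N = [::] -> n \in S.
Proof.
move=> HN H0; have [/HN //|ltnN] := leqP N n.
apply: contraT => nS.
by have := mem_gaps_below S N n; rewrite H0 nS ltnN.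
Qed.

Theorem mainTheorem2 (S : pred nat) (m N : nat) :
  numerical_semigroup S ->
  0 < m ->
  (forall n, N <= n -> n \in S) ->
  equidistributed (gaps_below S N) m ->
  (m \in S <-> size (gaps_below S N) = 0).
Proof.
move=> semS m0 HN eqH; split=> [Sm | /size0nil H0].
- apply/eqP; rewrite size_eq0; apply/eqP.
  apply: equidistributed_nil m0 eqH _ => x.
  exact: gaps_below_modn_neq0 semS Sm.
- exact: gaps_below_nil_mem HN H0.
Qed.
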